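(* Let $Q_{n,m}$ be as defined in the context. Every coloring of $Q_{n,m}$ has cardinality at least $\operatorname{slog}(n,m+1)$.
   Context: A quantum graph $G$ consists of a finite-dimensional complex inner product space $V(G)$ and a real vector space $E(G)$ of self-adjoint operators on $V(G)$ containing the identity $I$; write $|G|=\dim V(G)$ and $\|G\|=\dim E(G)-1$. A code of $G$ is a subspace $C\subseteq V(G)$ such that there is a function $\epsilon_C:E(G)\to\mathbb{R}$ with $P_CAP_C=\epsilon_C(A)P_C$ for all $A\in E(G)$, where $P_C$ is the orthogonal projection onto $C$. A coloring of $G$ is a set $K$ of codes of $G$ with $\sum_{C\in K}P_C=I$. The step logarithm is defined for positive integers $q$ and nonnegative integers $p$ by $\operatorname{slog}(0,q)=0$ and $\operatorname{slog}(p,q)=\operatorname{slog}(p-\lceil p/q\rceil,q)+1$ for $p\ge1$. Let $n\ge 2$ and $1\le m\le n-1$ be integers. $Q_{n,m}$ denotes any quantum graph with $|Q_{n,m}|=n$, $\|Q_{n,m}\|=m$, such that: (i) $E(Q_{n,m})$ is commutative; (ii) (tropical) $E(Q_{n,m})$ has a basis $\{I,A_1,\dots,A_m\}$ and there is an orthonormal basis of $V(Q_{n,m})$ of common eigenvectors of the $A_i$ such that, writing the eigenvalues of $A_i$ in decreasing order $\lambda_{i,1},\dots,\lambda_{i,n}$ with corresponding common eigenvectors $w_{i,1},\dots,w_{i,n}$, one has $0<\lambda_{i,j+1}<\lambda_{i,j}/n^2$ for all $i$ and $1\le j<n$; (iii) (cyclical) for $1\le i<m$ and all $j$, $w_{i+1,j}=w_{i,j+s_i}$,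 with the second index taken modulo $n$ in $\{1,\dots,n\}$, where $s_i=\lfloor n/m\rfloor+1$ if $1\le i\le (n\bmod m)$ and $s_i=\lfloor n/m\rfloor$ otherwise; (iv) the common eigenvectors are enumerated as $w_1,\dots,w_n$ (each common eigenvector exactly once) so that for every $l\in\{1,\dots,n\}$ one has $w_l=w_{i,\lceil l/m\rceil}$ for some $i\in\{1,\dots,m\}$. *)

From HB Require Import structures.
From mathcomp Require Import all_boot all_order all_algebra all_fingroup.
Set Implicit Arguments. Unset Strict Implicit. Unset Printing Implicit Defensive.
Import Order.TTheory GRing.Theory Num.Theory.

(* Step logarithm: slog 0 q = 0, slog p q = slog (p - ceil(p/q)) q + 1.
   Computed with fuel p (each step decreases p by ceil(p/q) >= 1 when q >= 1). *)
Fixpoint slog_aux (fuel p q : nat) : nat :=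
  match fuel with
  | 0 => 0
  | f.+1 => if p is 0 then 0 else (slog_aux f (p - (p + q - 1) %/ q) q).+1
  end.
Definition slog (p q : nat) : nat := slog_aux p p q.

Local Open Scope ring_scope.

Section QG.
Variables (C : numClosedFieldType) (n : nat).

Definition adj (M : 'M[C]_n) : 'M[C]_n := map_mx Num.conj (M^T).
Definition adjv (v : 'cV[C]_n) : 'rV[C]_n := map_mx Num.conj (v^T).
Definition self_adjoint (M : 'M[C]_n) : Prop := adj M = M.

Definition orth_proj (P : 'M[C]_n) : Prop := P *m P = P /\ adj P = P.

(* A code of a quantum graph with edge space E (given as a predicate),
   represented by its orthogonal projection P_C *)
Definition is_code (E : 'M[C]_n -> Prop) (P : 'M[C]_n) : Prop :=
  orth_proj P /\
  forall B, E B -> exists e : C, e \is Num.real /\ P *m B *m P = e *: P.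

Definition coloring (E : 'M[C]_n -> Prop) (K : seq 'M[C]_n) : Prop :=
  uniq K /\ (forall P, P \in K -> is_code E P) /\ \sum_(P <- K) P = 1%:M.

Definition real_span (m : nat) (A : 'I_m -> 'M[C]_n) (B : 'M[C]_n) : Prop :=
  exists c : 'I_m.+1 -> C, (forall i, c i \is Num.real) /\
    B = c ord0 *: 1%:M + \sum_(i < m) c (lift ord0 i) *: A i.

Definition real_indep (m : nat) (A : 'I_m -> 'M[C]_n) : Prop :=
  forall c : 'I_m.+1 -> C, (forall i, c i \is Num.real) ->
    c ord0 *: 1%:M + \sum_(i < m) c (lift ord0 i) *: A i = 0 ->
    forall i, c i = 0.

Definition orthonormal_basis (u : 'I_n -> 'cV[C]_n) : Prop :=
  forall a b, adjv (u a) *m u b = ((a == b)%:R)%:M.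

End QG.

(* cyclic shift s_i, for 0-indexed i (i.e. paper index i+1) *)
Definition shift_s (n m i : nat) : nat := n %/ m + (i < n %% m).

From HB Require Import structures.
From mathcomp Require Import all_boot all_order all_algebra all_fingroup.
From mathcomp Require Import zify.
Import Order.TTheory GRing.Theory Num.Theory.

(* Conjugating by the unitary matrix whose columns are the common eigenvectors
   turns each A_i into the diagonal matrix D_i of its eigenvalues mu_i, and a
   code into an orthogonal projection Q with Q D_i Q = eps_i(Q) Q.  Sort the
   codes of a coloring by rank and let d be the rank of the next one.  Every
   later code Q' has rank at most #{b | eps_i(Q') <= mu_i(b)}; so if th_i is the
   largest eps_i of a later code, the first d - 1 eigenvectors of each A_i
   have eigenvalue at least n^2 th_i, and the cyclic arrangement of the
   eigenvectors makes these cover min(n, m(d - 1)) basis vectors.  Weighing a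
   basis vector b by sum_i mu_i(b) / th_i, the later codes have weighted
   diagonal mass at most m n < n^2, so their diagonal mass on those vectors is
   below 1; hence the earlier codes have total rank at least min(n, m(d - 1)).
   This is the recursion that defines slog n m.+1. *)

Definition slog_next (p q : nat) : nat := p - (p + q - 1) %/ q.

Lemma slog_next_lt p q : 0 < q -> 0 < p -> slog_next p q < p.
Proof.
move=> q_gt0 p_gt0; have : 0 < (p + q - 1) %/ q by rewrite divn_gt0 //; lia.
rewrite /slog_next; lia.
Qed.

Lemma leq_slog_next p p' q : 0 < q -> p <= p' -> slog_next p q <= slog_next p' q.
Proof.
move=> q_gt0 le_pp'; rewrite /slog_next.
have : (p + q - 1) %/ q < p.+1 by rewrite ltn_divLR //; case: q q_gt0 => // q _; nia.
have : (p' + q - 1) %/ q <= (p + q - 1) %/ q + (p' - p).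
  rewrite -ltnS ltn_divLR //.
  have := divn_eq (p + q - 1) q; have := ltn_pmod (p + q - 1) q_gt0; nia.
lia.
Qed.

Lemma slog_aux_fuel f f' p q : 0 < q -> p <= f -> p <= f' ->
  slog_aux f p q = slog_aux f' p q.
Proof.
move=> q_gt0; elim: f f' p => [|f IH] [|f'] [|p] //= le_pf le_pf'.
congr S; apply: IH; have := @slog_next_lt p.+1 q q_gt0 isT; rewrite /slog_next; lia.
Qed.

Lemma slogS p q : 0 < q -> 0 < p -> slog p q = (slog (slog_next p q) q).+1.
Proof.
move=> q_gt0; case: p => // p _; rewrite /slog /=; congr S.
by apply: slog_aux_fuel => //; have := @slog_next_lt p.+1 q q_gt0 isT; rewrite /slog_next; lia.
Qed.

Lemma leq_slog p p' q : 0 < q -> p <= p' -> slog p q <= slog p' q.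
Proof.
move=> q_gt0 le_pp'.
suff gen f a b : a <= b -> b <= f -> slog_aux f a q <= slog_aux f b q.
  by rewrite /slog (@slog_aux_fuel p p' p q) //; exact: gen.
elim: f a b => [|f IH] [|a] [|b] //= le_ab le_bf.
rewrite ltnS; apply: IH; first exact: leq_slog_next.
by have := @slog_next_lt b.+1 q q_gt0 isT; rewrite /slog_next; lia.
Qed.

Lemma slog_add_le S d m : m * d.-1 <= S -> slog (S + d) m.+1 <= (slog S m.+1).+1.
Proof.
move=> le_S; case: (posnP (S + d)) => [->|pos]; first by rewrite /slog.
rewrite slogS // ltnS; apply: leq_slog => //.
have : d <= (S + d + m.+1 - 1) %/ m.+1 by rewrite leq_divRL //; nia.
rewrite /slog_next; lia.
Qed.

Lemma slog_sum_le_size m (s : seq nat) :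
  (forall j, j < size s -> m * (nth 0 s j).-1 <= \sum_(x <- take j s) x) ->
  slog (\sum_(x <- s) x) m.+1 <= size s.
Proof.
elim/last_ind: s => [|s x IH] hs; first by rewrite big_nil.
rewrite -cats1 big_cat big_seq1 size_cat addn1 /=.
apply: leq_trans (@slog_add_le _ x m _) _.
  have := hs (size s); rewrite size_rcons nth_rcons ltnn eqxx.
  by rewrite -cats1 take_size_cat //; apply.
rewrite ltnS; apply: IH => j lt_js; have := hs j.
by rewrite size_rcons nth_rcons lt_js -cats1 takel_cat ?(ltnW lt_js) //; apply; apply: ltnW.
Qed.

Lemma find_interval {o : nat -> nat} {k x : nat} : o 0 = 0 -> x < o k ->
  exists2 j, j < k & o j <= x < o j.+1.
Proof.
move=> o0; elim: k => [|k IH] lt_x; first by rewrite o0 in lt_x.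
case: (ltnP x (o k)) => [/IH [j lt_jk hj]|le_x]; last by exists k => //; apply/andP.
by exists j => //; apply: ltnW.
Qed.

Section CyclicCover.
Variables (n m : nat) (n_gt0 : 0 < n) (m_gt0 : 0 < m).
Variable sigma : 'I_m -> {perm 'I_n}.
Hypothesis sigma_cyc : forall (i k : 'I_m) (j j' : 'I_n), val k = (val i).+1 ->
  val j' = (val j + shift_s n m i) %% n -> sigma k j = sigma i j'.

Definition shift_offset (i : nat) : nat := \sum_(0 <= k < i) shift_s n m k.

Lemma shift_offsetS i : shift_offset i.+1 = shift_offset i + shift_s n m i.
Proof. by rewrite /shift_offset big_nat_recr. Qed.

Lemma leq_shift_offset i j : i <= j -> shift_offset i <= shift_offset j.
Proof.
move=> le_ij; rewrite /shift_offset (@big_cat_nat _ _ _ i 0 j) //=.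
exact: leq_addr.
Qed.

Lemma shift_offset_last : shift_offset m = n.
Proof.
have count_lt r i : \sum_(0 <= k < i) (k < r : nat) = minn i r.
  by elim: i => [|i IH]; rewrite ?big_nil ?big_nat_recr //= ?IH; lia.
rewrite /shift_offset big_split /= sum_nat_const_nat count_lt.
have := ltn_pmod n m_gt0; have := divn_eq n m; lia.
Qed.

Let pos (b : 'I_n) : 'I_n := ((sigma (Ordinal m_gt0))^-1)%g b.

Lemma sigma_offset (i : 'I_m) (p : 'I_n) :
  val (pos (sigma i p)) = (p + shift_offset i) %% n.
Proof.
case: i => i lt_im; elim: i lt_im p => [|i IH] lt_im p.
  have -> : Ordinal lt_im = Ordinal m_gt0 by exact: val_inj.
  by rewrite /pos permK /shift_offset big_nil addn0 modn_small.
have lt_i : i < m by apply: ltnW.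
pose j' : 'I_n := Ordinal (ltn_pmod (p + shift_s n m i) n_gt0).
rewrite (@sigma_cyc (Ordinal lt_i) (Ordinal lt_im) p j') // IH /=.
by rewrite modnDml shift_offsetS; congr (_ %% n); lia.
Qed.

(* In the enumeration of sigma 0, the first L vectors of sigma i fill the block
   [shift_offset i, shift_offset i + L); these blocks are disjoint when
   L <= n %/ m and cover 'I_n otherwise. *)
Variables (H : {set 'I_n}) (L : nat).
Hypothesis sigma_cover : forall (i : 'I_m) (p : 'I_n), p < L -> sigma i p \in H.

Lemma card_cover_small : L <= n %/ m -> m * L <= #|H|.
Proof.
move=> le_L; have le_Ln : L <= n := leq_trans le_L (leq_div n m).
have lt_next (i : 'I_m) (p : 'I_L) : p + shift_offset i < shift_offset i.+1.
  rewrite shift_offsetS addnC ltn_add2l.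
  exact: leq_trans (ltn_ord p) (leq_trans le_L (leq_addr _ _)).
have lt_n (i : 'I_m) (p : 'I_L) : p + shift_offset i < n.
  by rewrite -shift_offset_last (leq_trans (lt_next i p)) ?leq_shift_offset.
have le_block (i i' : 'I_m) (p p' : 'I_L) :
    p + shift_offset i = p' + shift_offset i' -> i <= i'.
  move=> e; rewrite leqNgt; apply/negP => lt_i'i.
  have := @leq_shift_offset i'.+1 i lt_i'i; have := lt_next i' p'; lia.
pose f (x : 'I_m * 'I_L) := sigma x.1 (widen_ord le_Ln x.2).
have f_inj : injective f.
  move=> [i p] [i' p'] /(congr1 (fun b => val (pos b))).
  rewrite !sigma_offset !modn_small ?lt_n //= => e.
  have eq_ii' : i = i'.
    by apply/val_inj/eqP; rewrite eqn_leq (le_block _ _ _ _ e) (le_block _ _ _ _ (esym e)).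
  by subst i'; congr (_, _); apply/val_inj; move: e => /eqP; rewrite eqn_add2r => /eqP.
rewrite -[m]card_ord -[L]card_ord -card_prod -cardsT -(card_imset _ f_inj).
by apply/subset_leq_card/subsetP => _ /imsetP [[i p] _ ->]; apply: sigma_cover => /=.
Qed.

Lemma cover_full : n %/ m < L -> H = setT.
Proof.
move=> lt_L; apply/setP => b; rewrite inE; apply/idP.
have off0 : shift_offset 0 = 0 by rewrite /shift_offset big_nil.
have lt_b : pos b < shift_offset m by rewrite shift_offset_last.
have [k lt_km /andP [le_kb lt_bk]] := find_interval off0 lt_b.
have lt_pn : pos b - shift_offset k < n by rewrite (leq_ltn_trans (leq_subr _ _)).
have <- : sigma (Ordinal lt_km) (Ordinal lt_pn) = b.
  apply: (@perm_inj _ (sigma (Ordinal m_gt0))^-1%g); apply/val_inj.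
  by rewrite -/(pos _) sigma_offset /= subnK // modn_small.
apply: sigma_cover => /=; move: lt_bk lt_L; rewrite shift_offsetS /shift_s.
by case: (k < n %% m); lia.
Qed.

Lemma card_cyclic_cover : minn n (m * L) <= #|H|.
Proof.
case: (leqP L (n %/ m)) => [/card_cover_small|/cover_full->]; last first.
  by rewrite cardsT card_ord geq_minl.
exact: leq_trans (geq_minr _ _).
Qed.

End CyclicCover.

Arguments card_cyclic_cover {n m} n_gt0 m_gt0 {sigma} sigma_cyc {H L}.

Local Open Scope ring_scope.
Local Open Scope sesquilinear_scope.

Lemma mxtrace_idem (F : fieldType) n (P : 'M[F]_n) : P *m P = P -> \tr P = (\rank P)%:R.
Proof.
move=> PP; have base_inv : row_base P *m col_base P = 1%:M.
  apply: (row_full_inj (col_base_full P)); apply: (row_free_inj (row_base_free P)).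
  rewrite mulmx1 mulmx_base mulmxA mulmx_base -mulmxA mulmx_base.
  exact: PP.
by rewrite -{1}(mulmx_base P) mxtrace_mulC base_inv mxtrace1.
Qed.

Lemma trmxC_mul (C : numClosedFieldType) p q r (X : 'M[C]_(p, q)) (Y : 'M[C]_(q, r)) :
  (X *m Y)^t* = Y^t* *m X^t*.
Proof. by rewrite trmx_mul map_mxM. Qed.

Section OrthProj.
Context {C : numClosedFieldType} {n : nat}.
Implicit Types (P : 'M[C]_n) (mu : 'I_n -> C) (v : 'rV[C]_n).

Definition diag_of mu : 'M[C]_n := diag_mx (\row_b mu b).

Lemma orth_proj_diag P b : orth_proj P -> P b b = \sum_k P b k * (P b k)^*.
Proof.
move=> [PP PH]; rewrite -{1}PP mxE; apply: eq_bigr => k _.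
by have := congr1 (fun M : 'M[C]_n => M k b) PH; rewrite !mxE => <-.
Qed.

Lemma orth_proj_diag_ge0 P b : orth_proj P -> 0 <= P b b.
Proof. by move/orth_proj_diag->; apply: sumr_ge0 => k _; exact: mul_conjC_ge0. Qed.

Lemma mxtrace_mul_diag P mu : \tr (P *m diag_of mu) = \sum_b P b b * mu b.
Proof. by apply: eq_bigr => b _; rewrite mul_mx_diag !mxE. Qed.

Lemma diag_form mu v : (v *m diag_of mu *m v^t*) 0 0 = \sum_b mu b * (v 0 b * (v 0 b)^*).
Proof. by rewrite mxE; apply: eq_bigr => b _; rewrite mul_mx_diag !mxE mulrCA mulrA. Qed.

Lemma orth_proj_form {P} {B : 'M[C]_n} {e : C} {v} :
  orth_proj P -> P *m B *m P = e *: P -> v *m P = v ->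
  v *m B *m v^t* = e *: (v *m v^t*).
Proof.
move=> [_ PH] PBP vP.
have vtP : v^t* = P *m v^t* by rewrite -{1}vP trmxC_mul; congr (_ *m _).
rewrite -{1}vP {1}vtP !mulmxA -(mulmxA v P B) -(mulmxA v (P *m B) P) PBP.
by rewrite -scalemxAr -scalemxAl vP.
Qed.

Lemma diag_form_eq0 mu (e : C) v :
  e \is Num.real -> (forall b, mu b \is Num.real) -> (forall b, e <= mu b -> v 0 b = 0) ->
  \sum_b mu b * (v 0 b * (v 0 b)^*) = e * \sum_b v 0 b * (v 0 b)^* -> v = 0.
Proof.
move=> e_real mu_real v_small form_eq.
have term_ge0 b : 0 <= (e - mu b) * (v 0 b * (v 0 b)^*).
  have [le_e|lt_mu] := real_leP e_real (mu_real b); first by rewrite v_small ?mul0r ?mulr0.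
  by rewrite mulr_ge0 ?mul_conjC_ge0 // subr_ge0 ltW.
have : \sum_b (e - mu b) * (v 0 b * (v 0 b)^*) = 0.
  rewrite (eq_bigr (fun b => e * (v 0 b * (v 0 b)^*) - mu b * (v 0 b * (v 0 b)^*))).
    by rewrite sumrB -mulr_sumr form_eq subrr.
  by move=> b _; rewrite mulrBl.
move=> /(psumr_eq0P (fun b _ => term_ge0 b)) term_eq0; apply/rowP => b; rewrite mxE.
have [/v_small //|lt_mu] := real_leP e_real (mu_real b).
by have /eqP := term_eq0 b isT; rewrite mulf_eq0 subr_eq0 gt_eqF //= mul_conjC_eq0 => /eqP.
Qed.

Lemma compression_rank_le P mu (e : C) :
  orth_proj P -> e \is Num.real -> (forall b, mu b \is Num.real) ->
  P *m diag_of mu *m P = e *: P -> (\rank P <= #|[set b | (e <= mu b)%R]|)%N.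
Proof.
(* On the range of P the form v D v^* equals e |v|^2, which is impossible for a
   nonzero v supported where mu < e. *)
move=> Pproj e_real mu_real PDP; set G := [set b | (e <= mu b)%R].
pose sel : 'M[C]_(n, #|G|) := \matrix_(a, k) (a == enum_val k)%:R.
rewrite -(mxrank_mul_ker P sel).
suff -> : \rank (P :&: kermx sel)%MS = 0%N by rewrite addn0 rank_leq_col.
apply/eqP; rewrite mxrank_eq0; apply/rowV0P => v.
rewrite sub_capmx => /andP [/submxP [w ->] /sub_kermxP wPsel]; clear v.
have wPP : w *m P *m P = w *m P by rewrite -mulmxA Pproj.1.
apply: (@diag_form_eq0 mu e _ e_real mu_real).
  move=> b le_e; have bG : b \in G by rewrite inE.
  have := congr1 (fun X : 'M[C]_(1, #|G|) => X 0 (enum_rank_in bG b)) wPsel.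
  rewrite !mxE (bigD1 b) //= big1 ?addr0; first by rewrite !mxE enum_rankK_in // eqxx mulr1.
  by move=> a /negbTE neq_ab; rewrite !mxE enum_rankK_in // neq_ab mulr0.
rewrite -diag_form (orth_proj_form Pproj PDP wPP) !mxE; congr (_ * _).
by apply: eq_bigr => b _; rewrite !mxE.
Qed.

End OrthProj.

Lemma mxtrace_sum_idem (F : fieldType) n (L : seq 'M[F]_n) :
  (forall P, P \in L -> P *m P = P) ->
  \tr (\sum_(P <- L) P) = (\sum_(P <- L) \rank P)%:R.
Proof.
move=> L_idem; rewrite raddf_sum natr_sum big_seq [RHS]big_seq.
by apply: eq_bigr => P /L_idem /mxtrace_idem.
Qed.

Lemma weighted_mass_lt1 (R : numDomainType) (I : finType) (A : {pred I})
    (y w : I -> R) (c : R) :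
  (forall b, 0 <= y b) -> (forall b, 0 <= w b) -> (forall b, b \in A -> c <= w b) ->
  \sum_b y b * w b < c -> \sum_(b in A) y b < 1.
Proof.
move=> y_ge0 w_ge0 w_large lt_c.
have c_gt0 : 0 < c by apply: le_lt_trans lt_c; apply: sumr_ge0 => b _; exact: mulr_ge0.
rewrite -(ltr_pM2r c_gt0) mul1r mulr_suml; apply: le_lt_trans lt_c.
rewrite [X in _ <= X](bigID (mem A)) /= -[X in X <= _]addr0; apply: lerD.
  by apply: ler_sum => b /w_large; exact: ler_wpM2l.
by apply: sumr_ge0 => b _; exact: mulr_ge0.
Qed.

Lemma card_le_rank_sum (C : numClosedFieldType) n (Z : seq 'M[C]_n) (H : {set 'I_n}) :
  (forall Q, Q \in Z -> orth_proj Q) ->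
  \sum_(b in H) (1 - (\sum_(Q <- Z) Q) b b) < 1 -> (#|H| <= \sum_(Q <- Z) \rank Q)%N.
Proof.
move=> Z_proj; set z := fun b => (\sum_(Q <- Z) Q) b b.
have z_ge0 b : 0 <= z b.
  by rewrite /z summxE big_seq sumr_ge0 // => Q /Z_proj /orth_proj_diag_ge0.
have trZ : (\sum_(Q <- Z) \rank Q)%:R = \sum_b z b :> C.
  by rewrite -mxtrace_sum_idem // => Q /Z_proj [].
rewrite sumrB sumr_const ltrBlDr -ltnS -(ltr_nat C) -natr1 trZ addrC => /lt_le_trans; apply.
by rewrite lerD2r [X in _ <= X](bigID (mem H)) /= lerDl sumr_ge0.
Qed.

Section Decay.
Variables (R : numDomainType) (n : nat) (f : 'I_n -> R) (c : R).
Hypotheses (c_ge1 : 1 <= c) (f_gt0 : forall j, 0 < f j).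
Hypothesis f_decay : forall j k : 'I_n, val k = (val j).+1 -> c * f k < f j.

Lemma decay_le (j k : 'I_n) : (j <= k)%N -> f k <= f j.
Proof.
case: k => k lt_kn /=; elim: k lt_kn => [|k IH] lt_kn le_jk.
  by have -> : j = Ordinal lt_kn by apply/val_inj; move: le_jk; rewrite leqn0 => /eqP.
case: (ltngtP j k.+1) le_jk => [lt_jk|//|eq_jk] _; last first.
  by have -> : Ordinal lt_kn = j by exact/val_inj.
have lt_k : (k < n)%N by apply: ltnW.
apply: le_trans (IH lt_k lt_jk).
apply: le_trans (ltW (f_decay (Ordinal lt_k) (Ordinal lt_kn) erefl)).
by rewrite ler_peMl // ltW.
Qed.

Lemma decay_large_prefix (e : R) (d : nat) (p : 'I_n) :
  (d <= #|[set q | (e <= f q)%R]|)%N -> (p.+1 < d)%N -> c * e <= f p.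
Proof.
move=> le_d lt_pd; set S := [set q | (e <= f q)%R] in le_d.
have /existsP [q /andP [q_large lt_pq]] : [exists q, (q \in S) && (p < q)%N].
  apply: contraLR lt_pd; rewrite negb_exists -leqNgt => /forallP S_small.
  apply: leq_trans le_d _; have le_pn : (p.+1 <= n)%N := ltn_ord p.
  have widen_inj : injective (widen_ord le_pn) by move=> a b /(congr1 val) ab; exact: val_inj.
  rewrite -[p.+1]card_ord -cardsT -(card_imset _ widen_inj).
  apply/subset_leq_card/subsetP => q q_in; apply/imsetP.
  have lt_q : (q < p.+1)%N by rewrite ltnS leqNgt; have := S_small q; rewrite q_in.
  by exists (Ordinal lt_q) => //; exact/val_inj.
have lt_p1 : (p.+1 < n)%N := leq_ltn_trans lt_pq (ltn_ord q).
apply: ltW; apply: le_lt_trans (f_decay p (Ordinal lt_p1) erefl).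
rewrite ler_pM2l ?(lt_le_trans ltr01 c_ge1) //.
by move: q_large; rewrite inE => /le_trans; apply; exact: decay_le.
Qed.

End Decay.

Arguments decay_large_prefix {R n f c} c_ge1 f_gt0 f_decay {e d p}.

Lemma exists_real_max (T : eqType) (R : numDomainType) (s : seq T) (f : T -> R) :
  (forall x, x \in s -> f x \is Num.real) -> s != [::] ->
  exists2 x, x \in s & forall y, y \in s -> f y <= f x.
Proof.
elim: s => [//|a [|b s] IH] s_real _.
  by exists a; rewrite ?mem_head // => y; rewrite inE => /eqP ->.
have [|x x_in x_max] := IH _ isT; first by move=> y y_in; rewrite s_real // inE y_in orbT.
have x_in' : x \in [:: a, b & s] by rewrite inE x_in orbT.
have [le_xa|lt_ax] := real_leP (s_real x x_in') (s_real a (mem_head _ _)).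
  exists a; rewrite ?mem_head // => y.
  by rewrite inE => /predU1P [->|/x_max/le_trans]; [|apply].
exists x => // y; rewrite inE => /predU1P [->|/x_max //]; exact: ltW.
Qed.

Section DiagonalCodes.
Context {C : numClosedFieldType} {n m : nat}.
Variable mu : 'I_m -> 'I_n -> C.
Hypothesis mu_gt0 : forall i b, 0 < mu i b.

Definition diag_edges (B : 'M[C]_n) : Prop := exists i, B = diag_of (mu i).
Local Notation code := (is_code diag_edges).

Definition code_eig (Q : 'M[C]_n) i : C := \tr (Q *m diag_of (mu i)) / \tr Q.

Lemma code_eigP {Q : 'M[C]_n} i : code Q -> Q != 0 ->
  [/\ Q *m diag_of (mu i) *m Q = code_eig Q i *: Q,
      \tr (Q *m diag_of (mu i)) = code_eig Q i * \tr Q & 0 < code_eig Q i].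
Proof.
move=> [[QQ QH] Q_comp] Q_neq0.
have [|e [_ QDQ]] := Q_comp (diag_of (mu i)); first by exists i.
have trQ_gt0 : 0 < \tr Q by rewrite mxtrace_idem // ltr0n lt0n mxrank_eq0.
have trQD : \tr (Q *m diag_of (mu i)) = e * \tr Q.
  by rewrite -{1}QQ -mulmxA mxtrace_mulC QDQ mxtraceZ.
have -> : code_eig Q i = e by rewrite /code_eig trQD mulfK ?gt_eqF.
split=> //; rewrite -(pmulr_lgt0 _ trQ_gt0) -trQD mxtrace_mul_diag.
have term_ge0 b : 0 <= Q b b * mu i b by rewrite mulr_ge0 ?orth_proj_diag_ge0 ?ltW.
rewrite lt_def sumr_ge0 ?andbT //; apply: contraTneq trQ_gt0.
move=> /(psumr_eq0P (fun b _ => term_ge0 b)) term_eq0; rewrite /mxtrace big1 ?ltxx // => b _.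
by have /eqP := term_eq0 b isT; rewrite mulf_eq0 (gt_eqF (mu_gt0 _ _)) orbF => /eqP.
Qed.

Lemma code_rank_le Q i : code Q ->
  (\rank Q <= #|[set b | (code_eig Q i <= mu i b)%R]|)%N.
Proof.
move=> Q_code; have [->|Q_neq0] := eqVneq Q 0; first by rewrite mxrank0.
have [QDQ _ eig_gt0] := code_eigP i Q_code Q_neq0.
exact: compression_rank_le Q_code.1 (gtr0_real eig_gt0) (fun b => gtr0_real (mu_gt0 i b)) QDQ.
Qed.

Lemma code_weight_le Q (th : 'I_m -> C) : code Q -> Q != 0 ->
  (forall i, 0 < th i) -> (forall i, code_eig Q i <= th i) ->
  \sum_b Q b b * (\sum_i mu i b / th i) <= m%:R * \tr Q.
Proof.
move=> Q_code Q_neq0 th_gt0 th_ge.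
have trQ_ge0 : 0 <= \tr Q by rewrite mxtrace_idem ?Q_code.1.1 // ler0n.
under eq_bigr do rewrite mulr_sumr.
rewrite exchange_big /= -[m in m%:R]card_ord -sumr_const mulr_suml; apply: ler_sum => i _.
have [_ trQD _] := code_eigP i Q_code Q_neq0.
under eq_bigr do rewrite mulrA.
rewrite -mulr_suml -mxtrace_mul_diag trQD mulrAC.
by apply: ler_wpM2r => //; rewrite ler_pdivrMr // mul1r.
Qed.

Section LargeEntries.
Variables (Y : seq 'M[C]_n) (th : 'I_m -> C).
Hypotheses (Y_code : forall Q, Q \in Y -> code Q) (Y_neq0 : forall Q, Q \in Y -> Q != 0).
Hypotheses (th_gt0 : forall i, 0 < th i) (th_ge : forall Q i, Q \in Y -> code_eig Q i <= th i).
Hypotheses (Y_diag_le1 : forall b, (\sum_(Q <- Y) Q) b b <= 1) (lt_mn : (m < n)%N).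

Lemma large_mass_lt1 :
  \sum_(b in [set b | [exists i, (n ^ 2)%:R * th i <= mu i b]]) (\sum_(Q <- Y) Q) b b < 1.
Proof.
set y := fun b => (\sum_(Q <- Y) Q) b b.
have w_ge0 b : 0 <= \sum_i mu i b / th i by apply: sumr_ge0 => i _; rewrite divr_ge0 ?ltW.
apply: (@weighted_mass_lt1 _ _ _ y (fun b => \sum_i mu i b / th i) (n ^ 2)%:R) => //.
- by move=> b; rewrite /y summxE big_seq sumr_ge0 // => Q /Y_code [] /orth_proj_diag_ge0.
- move=> b; rewrite inE => /existsP [i large]; rewrite (bigD1 i) //= -[X in X <= _]addr0.
  by rewrite lerD ?ler_pdivlMr // sumr_ge0 // => k _; rewrite divr_ge0 ?ltW.
have sum_y_le : \sum_b y b <= n%:R.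
  by rewrite -[n in n%:R]card_ord -sumr_const; apply: ler_sum => b _; exact: Y_diag_le1.
have lt_mn2 : m%:R * n%:R < (n ^ 2)%:R :> C.
  by rewrite -natrM ltr_nat expnS ltn_pmul2r // (leq_ltn_trans _ lt_mn).
apply: le_lt_trans lt_mn2.
under eq_bigr do rewrite /y summxE mulr_suml.
rewrite exchange_big /=; apply: le_trans (_ : \sum_(Q <- Y) m%:R * \tr Q <= _).
  by rewrite !big_seq; apply: ler_sum => Q Q_in; apply: code_weight_le; auto.
by rewrite -mulr_sumr -raddf_sum ler_wpM2l //; apply: le_trans sum_y_le.
Qed.

End LargeEntries.
End DiagonalCodes.

Arguments code_eigP {C n m mu} mu_gt0 {Q} i.
Arguments code_rank_le {C n m mu} mu_gt0 Q i.
Arguments large_mass_lt1 {C n m mu} mu_gt0 {Y th}.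

Section CyclicDiagonal.
Context {C : numClosedFieldType} {n m : nat}.
Hypotheses (m_gt0 : (0 < m)%N) (lt_mn : (m < n)%N).
Variables (sigma : 'I_m -> {perm 'I_n}) (lam : 'I_m -> 'I_n -> C).
Hypothesis lam_gt0 : forall i j, 0 < lam i j.
Hypothesis lam_decay : forall i (j k : 'I_n), val k = (val j).+1 ->
  lam i k < lam i j / (n ^ 2)%:R.
Hypothesis sigma_cyc : forall (i k : 'I_m) (j j' : 'I_n), val k = (val i).+1 ->
  val j' = ((val j + shift_s n m i) %% n)%N -> sigma k j = sigma i j'.

Definition eigval i b : C := lam i ((sigma i)^-1 b)%g.
Local Notation code := (is_code (diag_edges eigval)).

Lemma eigval_sigma i j : eigval i (sigma i j) = lam i j.
Proof. by rewrite /eigval permK. Qed.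

Lemma eigval_gt0 i b : 0 < eigval i b.
Proof. exact: lam_gt0. Qed.

Lemma card_large_eigval i (e : C) :
  #|[set b | (e <= eigval i b)%R]| = #|[set q | (e <= lam i q)%R]|.
Proof.
rewrite -[in RHS](card_preimset _ (@perm_inj _ (sigma i)^-1%g)); apply: eq_card => b.
by rewrite !inE /eigval.
Qed.

Lemma lam_decay_mul i (j k : 'I_n) : val k = (val j).+1 -> (n ^ 2)%:R * lam i k < lam i j.
Proof.
have n2_gt0 : 0 < (n ^ 2)%:R :> C by rewrite ltr0n expn_gt0 (leq_ltn_trans (leq0n m) lt_mn).
by move=> /(lam_decay i); rewrite ltr_pdivlMr // mulrC.
Qed.

Lemma card_large_eigval_cover (th : 'I_m -> C) (d : nat) :
  (forall i, d <= #|[set b | (th i <= eigval i b)%R]|)%N ->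
  (minn n (m * d.-1) <= #|[set b | [exists i, ((n ^ 2)%:R * th i <= eigval i b)%R]]|)%N.
Proof.
move=> many_large; have n_gt0 : (0 < n)%N := leq_ltn_trans (leq0n m) lt_mn.
apply: (card_cyclic_cover n_gt0 m_gt0 sigma_cyc) => i p lt_p.
rewrite inE; apply/existsP; exists i; rewrite eigval_sigma.
apply: (decay_large_prefix (d := d) _ (lam_gt0 i) (lam_decay_mul i)).
- by rewrite ler1n expn_gt0 n_gt0.
- by rewrite -card_large_eigval.
- by move: lt_p; case: d {many_large}.
Qed.

Lemma rank_prefix_ge (Z Y : seq 'M[C]_n) (d : nat) :
  (forall Q, Q \in Z ++ Y -> code Q) -> \sum_(Q <- Z ++ Y) Q = 1%:M ->
  (forall Q, Q \in Y -> (0 < d <= \rank Q)%N) -> Y != [::] ->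
  (minn n (m * d.-1) <= \sum_(Q <- Z) \rank Q)%N.
Proof.
move=> codes partition Y_rank Y_neq_nil.
have Y_code Q : Q \in Y -> code Q by move=> Q_in; apply: codes; rewrite mem_cat Q_in orbT.
have Z_code Q : Q \in Z -> code Q by move=> Q_in; apply: codes; rewrite mem_cat Q_in.
have Y_neq0 Q : Q \in Y -> Q != 0.
  by move/Y_rank/andP => [d_gt0 le_d]; rewrite -mxrank_eq0 -lt0n (leq_trans d_gt0).
have eig_gt0 i Q : Q \in Y -> 0 < code_eig eigval Q i.
  by move=> Q_in; have [] := code_eigP eigval_gt0 i (Y_code Q Q_in) (Y_neq0 Q Q_in).
have max_eig i : exists z,
    z \in Y /\ forall Q, Q \in Y -> code_eig eigval Q i <= code_eig eigval z i.
  have [|Q Q_in Q_max] := @exists_real_max _ _ Y (fun Q => code_eig eigval Q i) _ Y_neq_nil.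
    by move=> Q /(eig_gt0 i)/gtr0_real.
  by exists Q.
have [z z_max] := fin_all_exists max_eig.
pose th i := code_eig eigval (z i) i.
have th_gt0 i : 0 < th i by apply: eig_gt0; case: (z_max i).
set H := [set b | [exists i, (n ^ 2)%:R * th i <= eigval i b]].
have cover : (minn n (m * d.-1) <= #|H|)%N.
  apply: card_large_eigval_cover => i; have [z_in _] := z_max i.
  have /andP [_ le_d] := Y_rank _ z_in.
  exact: leq_trans le_d (code_rank_le eigval_gt0 _ i (Y_code _ z_in)).
apply: (leq_trans cover); apply: card_le_rank_sum; first by move=> Q /Z_code [].
have diag_split b : (\sum_(Q <- Z) Q) b b + (\sum_(Q <- Y) Q) b b = 1.
  by have := congr1 (fun M : 'M[C]_n => M b b) partition; rewrite big_cat /= !mxE eqxx.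
have -> : \sum_(b in H) (1 - (\sum_(Q <- Z) Q) b b) = \sum_(b in H) (\sum_(Q <- Y) Q) b b.
  by apply: eq_bigr => b _; rewrite -(diag_split b) addrC addrK.
apply: (large_mass_lt1 eigval_gt0 Y_code Y_neq0 th_gt0) => //.
- by move=> Q i Q_in; case: (z_max i) => _; apply.
- move=> b; rewrite -(diag_split b) lerDr summxE big_seq sumr_ge0 // => Q.
  by move=> /Z_code [] /orth_proj_diag_ge0.
Qed.

Lemma diag_coloring_size (K : seq 'M[C]_n) :
  (forall Q, Q \in K -> code Q) -> \sum_(Q <- K) Q = 1%:M -> (slog n m.+1 <= size K)%N.
Proof.
move=> K_code K_sum; pose leR (P Q : 'M[C]_n) := (\rank P <= \rank Q)%N.
pose s := sort leR K; have s_perm : perm_eq s K by rewrite perm_sort.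
have s_sorted : sorted leR s by apply: sort_sorted => P Q; exact: leq_total.
have s_code Q : Q \in s -> code Q by rewrite (perm_mem s_perm); exact: K_code.
have s_sum : \sum_(Q <- s) Q = 1%:M by rewrite (perm_big _ s_perm).
have rank_total : (\sum_(Q <- s) \rank Q)%N = n.
  by apply/eqP; rewrite -(eqr_nat C) -mxtrace_sum_idem ?s_sum ?mxtrace1 // => Q /s_code [[]].
rewrite -(perm_size s_perm) -[X in slog X _]rank_total -(size_map mxrank).
have -> : (\sum_(Q <- s) \rank Q = \sum_(r <- map mxrank s) r)%N by rewrite big_map.
apply: slog_sum_le_size => j; rewrite size_map => lt_js.
rewrite (nth_map 0) // -map_take big_map; set d := \rank (nth 0 s j).
have [->|d_gt0] := posnP d; first by rewrite muln0.
have Y_rank Q : Q \in drop j s -> (0 < d <= \rank Q)%N.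
  rewrite d_gt0 => /(nthP 0) [k lt_k <-]; rewrite nth_drop.
  have leR_trans : transitive leR by move=> ? ? ?; exact: leq_trans.
  apply: (sorted_leq_nth leR_trans (fun P => leqnn _)) => //; rewrite ?inE ?leq_addr //.
  by rewrite -ltn_subRL -size_drop.
have Y_neq_nil : drop j s != [::] by rewrite -size_eq0 size_drop subn_eq0 -ltnNge.
have := @rank_prefix_ge (take j s) (drop j s) d; rewrite cat_take_drop.
move=> /(_ s_code s_sum Y_rank Y_neq_nil).
have : (\sum_(Q <- take j s) \rank Q + d <= n)%N.
  rewrite -[X in (_ <= X)%N]rank_total -[in X in (_ <= X)%N](cat_take_drop j s).
  rewrite big_cat leq_add2l.
  by rewrite (drop_nth 0) // big_cons leq_addr.
move=> le_n; rewrite geq_min => /orP [le_nS|//]; move: (leq_trans le_n le_nS).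
by rewrite -[X in (_ <= X)%N]addn0 leq_add2l leqNgt d_gt0.
Qed.

End CyclicDiagonal.

Arguments diag_coloring_size {C n m} m_gt0 lt_mn {sigma lam}.

Section Conjugation.
Context {C : numClosedFieldType} {n : nat}.
Implicit Types (E : 'M[C]_n -> Prop) (P W : 'M[C]_n) (u : 'I_n -> 'cV[C]_n).

Lemma is_code_sub E E' P : (forall B, E' B -> E B) -> is_code E P -> is_code E' P.
Proof. by move=> sub_E [P_proj P_comp]; split=> // B /sub_E /P_comp. Qed.

Lemma is_code_conj {E W P} : W \is unitarymx -> is_code E P ->
  is_code (fun B => E (W^t* *m B *m W)) (W *m P *m W^t*).
Proof.
move=> /unitarymxP W_unit [[PP PH] P_comp]; have Wt_unit := mulmx1C W_unit.
have conjM Q R : W *m Q *m W^t* *m (W *m R *m W^t*) = W *m (Q *m R) *m W^t*.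
  by rewrite !mulmxA -(mulmxA _ (W^t*) W) Wt_unit mulmx1.
split; first split.
- by rewrite conjM PP.
- have PtH : P^t* = P := PH.
  by rewrite /adj !trmxC_mul trmxCK PtH mulmxA.
move=> B /P_comp [e [e_real PBP]]; exists e; split=> //.
have -> : W *m P *m W^t* *m B *m (W *m P *m W^t*) = W *m (P *m (W^t* *m B *m W) *m P) *m W^t*.
  by rewrite !mulmxA.
by rewrite PBP -scalemxAr -scalemxAl.
Qed.

Definition basis_mx (u : 'I_n -> 'cV[C]_n) : 'M[C]_n := \matrix_(a, b) u b a 0.

Lemma basis_mx_unitary {u} : orthonormal_basis u -> basis_mx u \is unitarymx.
Proof.
move=> u_on; apply/unitarymxP/mulmx1C/matrixP => a b; rewrite !mxE.
have := congr1 (fun M : 'M[C]_1 => M 0 0) (u_on a b); rewrite !mxE eqxx mulr1n => <-.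
by apply: eq_bigr => k _; rewrite !mxE.
Qed.

Lemma orthonormal_inj {u} : orthonormal_basis u -> injective u.
Proof.
move=> u_on a b eq_ab; have := u_on a b; rewrite eq_ab u_on.
move=> /(congr1 (fun M : 'M[C]_1 => M 0 0)); rewrite !mxE eqxx.
by case: (a =P b) => // _ /=; rewrite !mulr1n => /eqP; rewrite oner_eq0.
Qed.

Lemma basis_mx_eigen {A : 'M[C]_n} {u} {s : {perm 'I_n}} {l : 'I_n -> C} :
  (forall j, A *m u (s j) = l j *: u (s j)) ->
  A *m basis_mx u = basis_mx u *m diag_of (fun b => l (s^-1 b)%g).
Proof.
move=> eig; apply/matrixP => a b; rewrite mul_mx_diag !mxE.
have := congr1 (fun v : 'cV[C]_n => v a 0) (eig (s^-1 b)%g); rewrite permKV !mxE mulrC => <-.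
by apply: eq_bigr => k _; rewrite !mxE.
Qed.

End Conjugation.

Lemma real_span_gen (C : numClosedFieldType) n m (A : 'I_m -> 'M[C]_n) i : real_span A (A i).
Proof.
exists (fun k => (k == lift ord0 i)%:R); split=> [k|]; first exact: realn.
rewrite (negbTE (neq_lift _ _)) scale0r add0r (bigD1 i) //= eqxx scale1r big1 ?addr0 // => k.
by rewrite (inj_eq (@lift_inj _ ord0)) => /negbTE->; rewrite scale0r.
Qed.

Theorem proposition2 (C : numClosedFieldType) (n m : nat)
  (hn : (2 <= n)%N) (hm1 : (1 <= m)%N) (hmn : (m <= n.-1)%N)
  (A : 'I_m -> 'M[C]_n)
  (hsa : forall i, self_adjoint (A i))
  (hindep : real_indep A)
  (hcomm : forall i k, A i *m A k = A k *m A i)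
  (u : 'I_n -> 'cV[C]_n) (hu : orthonormal_basis u)
  (sigma : 'I_m -> {perm 'I_n}) (lam : 'I_m -> 'I_n -> C)
  (heig : forall i j, A i *m u (sigma i j) = lam i j *: u (sigma i j))
  (hpos : forall i j, 0 < lam i j)
  (hdec : forall i (j k : 'I_n), val k = (val j).+1 ->
            lam i k < lam i j / (n ^ 2)%:R)
  (hcyc : forall (i k : 'I_m) (j j' : 'I_n), val k = (val i).+1 ->
            val j' = ((val j + shift_s n m i) %% n)%N ->
            u (sigma k j) = u (sigma i j'))
  (henum : exists tau : {perm 'I_n}, forall l : 'I_n,
            exists (i : 'I_m) (j : 'I_n), val j = (val l %/ m)%N /\
              u (tau l) = u (sigma i j))
  (K : seq 'M[C]_n) (hK : coloring (real_span A) K) :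
  (slog n m.+1 <= size K)%N.
Proof.
have m_lt_n : (m < n)%N by lia.
have sigma_cyc (i k : 'I_m) (j j' : 'I_n) : val k = (val i).+1 ->
    val j' = ((val j + shift_s n m i) %% n)%N -> sigma k j = sigma i j'.
  by move=> ik jj'; apply: (orthonormal_inj hu); exact: hcyc.
have U_unit := basis_mx_unitary hu; set U := basis_mx u in U_unit.
have A_diag i : A i = U *m diag_of (eigval sigma lam i) *m U^t*.
  by rewrite -(basis_mx_eigen (heig i)) mulmxtVK.
have [_ [K_code K_sum]] := hK.
rewrite -(size_map (fun P => U^t* *m P *m U)).
apply: (diag_coloring_size hm1 m_lt_n hpos hdec sigma_cyc).
  move=> _ /mapP [P P_in ->].
  have Ut_unit : U^t* \is unitarymx by rewrite trmxC_unitary.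
  have := is_code_conj Ut_unit (K_code P P_in); rewrite trmxCK.
  by apply: is_code_sub => _ [i ->]; rewrite -A_diag; exact: real_span_gen.
by rewrite big_map -mulmx_suml -mulmx_sumr K_sum mulmx1 (mulmx1C (unitarymxP U_unit)).
Qed.
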